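(* Let $\mathcal X=\{1,\ldots,n\}$, $N\ge1$, and let $M=[m_{ij}]$ be an $n\times n$ matrix with nonnegative entries such that all entries of $M^N$ are positive. Let $\lambda_M>0$ be the spectral radius of $M$ (its Perron eigenvalue), and let $\phi,\hat\phi$ be right and left eigenvectors of $M$ for $\lambda_M$ with strictly positive entries ($M\phi=\lambda_M\phi$, $M^T\hat\phi=\lambda_M\hat\phi$), normalized so that $\sum_{x\in\mathcal X}\phi(x)\hat\phi(x)=1$. Define the probability distribution $\bar\nu(x)=\phi(x)\hat\phi(x)$. Let $\mu_0$ be a measure on $\mathcal X$ with $\mu_0(x)>0$ for all $x$, and let $\mathfrak M$ be the measure on $\mathcal X^{N+1}$ given by $\mathfrak M(x_0,\ldots,x_N)=\mu_0(x_0)m_{x_0x_1}\cdots m_{x_{N-1}x_N}$. Then the solution $\mathfrak M^*[\bar\nu,\bar\nu]$ of the problem of minimizing $\mathbb D(P\|\mathfrak M)$ over all probability distributions $P$ on $\mathcal X^{N+1}$ whose marginals at times $0$ and $N$ both equal $\bar\nu$ is a Markov measure with the time-invariant transition matrix $$\bar\Pi=\lambda_M^{-1}\operatorname{diag}(\phi)^{-1}M\operatorname{diag}(\phi),$$ and $\bar\nu$ is an invariant measure of $\bar\Pi$, i.e. $\bar\Pi^T\bar\nu=\bar\nu$.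
   Context: Relative entropy of a probability distribution $P$ with respect to a nonnegative measure $Q$ on a finite set: $\mathbb D(P\|Q)=\sum_x P(x)\log\frac{P(x)}{Q(x)}$ if $\mathrm{supp}(P)\subseteq\mathrm{supp}(Q)$ (with $0\log0=0$), and $+\infty$ otherwise. *)

From HB Require Import structures.
From mathcomp Require Import all_boot all_order all_algebra.
From mathcomp Require Import constructive_ereal reals exp.
From mathcomp Require Import complex.
Set Implicit Arguments. Unset Strict Implicit. Unset Printing Implicit Defensive.
Import Order.TTheory GRing.Theory Num.Theory.
Local Open Scope ring_scope.

Definition relent (R : realType) (T : finType) (P Q : T -> R) : \bar R :=
  if [forall x, (P x != 0) ==> (Q x != 0)] then
    (\sum_(x : T) (if P x == 0 then 0 else P x * ln (P x / Q x)))%:E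
  else +oo%E.

Definition is_prob (R : realType) (T : finType) (P : T -> R) : Prop :=
  (forall x, 0 <= P x) /\ \sum_(x : T) P x = 1.

Definition path_space (n N : nat) := {ffun 'I_N.+1 -> 'I_n}.

Definition marg (R : realType) (n N : nat) (P : path_space n N -> R) (t : 'I_N.+1)
  (x : 'I_n) : R := \sum_(w : path_space n N | w t == x) P w.

Definition markov_meas (R : realType) (n N : nat) (mu : 'I_n -> R) (K : 'M[R]_n)
  (w : path_space n N) : R :=
  mu (w ord0) * \prod_(t < N) K (w (widen_ord (leqnSn N) t)) (w (lift ord0 t)).

Definition spectral_radius (R : realType) (n : nat) (M : 'M[R]_n) (r : R) : Prop :=
  let Mc := map_mx (fun a : R => (a%:C)%C) M in
  (exists z : R[i], root (char_poly Mc) z /\ `|z| = (r%:C)%C) /\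
  (forall z : R[i], root (char_poly Mc) z -> `|z| <= (r%:C)%C).

From HB Require Import structures.
From mathcomp Require Import all_boot all_order all_algebra.
From mathcomp Require Import constructive_ereal reals exp.
From mathcomp Require Import complex.
From mathcomp Require Import ring lra.
Import Order.TTheory GRing.Theory Num.Theory.
Local Open Scope ring_scope.
Set Implicit Arguments. Unset Strict Implicit. Unset Printing Implicit Defensive.

(* The h-transform Pibar of M by phi is stochastic and has invariant law nubar,
   so the Markov measure Pstar with initial law nubar and kernel Pibar has both
   endpoint marginals equal to nubar.  Telescoping the ratios
   phi(x_(t+1)) / phi(x_t) gives Pstar = r * frakM with
   r(x_0, ..., x_N) = phih(x_0) phi(x_N) / (lam^N mu0(x_0)), a function of the
   endpoints only.  Hence for every P with the prescribed endpoint marginals,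
   D(P || frakM) = D(P || Pstar) + sum_x nubar(x) ln (...), where the last term
   does not depend on P, and Gibbs' inequality D(P || Pstar) >= 0, with
   equality only at P = Pstar, identifies Pstar as the unique minimiser.
   Primitivity of M and the spectral-radius property only guarantee that
   positive eigenvectors phi, phih exist; the argument does not use them. *)

Section LogInequalities.
Variable R : realType.

Lemma ln_le_subr1 (y : R) : 0 < y -> ln y <= y - 1.
Proof.
by move=> y0; have := @le_ln1Dx _ (y - 1); rewrite subrKC ltrBrDl addrN; apply.
Qed.

Lemma ln_eq_subr1 (y : R) : 0 < y -> ln y = y - 1 -> y = 1.
Proof.
move=> y0 lny; have [/eqP|lny0] := eqVneq (ln y) 0; first by rewrite ln_eq0 // => /eqP.
by have := expR_gt1Dx lny0; rewrite lnK ?posrE // lny addrC subrK ltxx.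
Qed.

Lemma ler_subr_mul_ln (p q : R) : 0 < p -> 0 < q -> p - q <= p * ln (p / q).
Proof.
move=> p0 q0; rewrite -[p / q]invf_div lnV ?posrE ?divr_gt0 // mulrN lerNr opprB.
have : p * ln (q / p) <= p * (q / p - 1) by rewrite ler_pM2l // ln_le_subr1 ?divr_gt0.
by rewrite mulrBr mulrCA divff ?gt_eqF // !mulr1.
Qed.

Lemma mul_ln_div_eq_subr (p q : R) : 0 < p -> 0 < q -> p * ln (p / q) = p - q -> p = q.
Proof.
move=> p0 q0; rewrite -[p / q]invf_div lnV ?posrE ?divr_gt0 // mulrN => E.
have : ln (q / p) = q / p - 1.
  by apply: (mulfI (lt0r_neq0 p0)); rewrite mulrBr mulrCA divff ?lt0r_neq0 // !mulr1; lra.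
move/(ln_eq_subr1 (divr_gt0 q0 p0)) => qp1.
by rewrite -[q](divfK (lt0r_neq0 p0)) qp1 mul1r.
Qed.

End LogInequalities.

Section RelativeEntropy.
Variables (R : realType) (T : finType).
Implicit Types P Q F r : T -> R.

Definition abs_continuous P Q := [forall x, (P x != 0) ==> (Q x != 0)].

Definition relent_sum P Q : R :=
  \sum_x (if P x == 0 then 0 else P x * ln (P x / Q x)).

Lemma relent_fin P Q : abs_continuous P Q -> relent P Q = (relent_sum P Q)%:E.
Proof. by rewrite /relent -/(abs_continuous P Q) => ->. Qed.

Lemma relent_oo P Q : ~~ abs_continuous P Q -> relent P Q = +oo%E.
Proof. by rewrite /relent -/(abs_continuous P Q) => /negPf ->. Qed.

Lemma relentxx P : relent P P = 0%E.
Proof.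
rewrite relent_fin; last by apply/forallP => x; rewrite implybb.
by congr EFin; apply: big1 => x _; case: eqP => // /eqP Px; rewrite divff // ln1 mulr0.
Qed.

Lemma relent_tilt P F Q r : (forall x, 0 <= P x) -> (forall x, 0 <= F x) ->
  (forall x, 0 < r x) -> (forall x, Q x = r x * F x) ->
  relent P F = (relent P Q + (\sum_x P x * ln (r x))%:E)%E.
Proof.
move=> P0 F0 r0 QE.
have acQF : abs_continuous P Q = abs_continuous P F.
  by apply: eq_forallb => x; rewrite QE mulf_eq0 negb_or (lt0r_neq0 (r0 x)).
have [acF|nacF] := boolP (abs_continuous P F); last first.
  by rewrite !relent_oo ?acQF // addye.
rewrite !relent_fin ?acQF // -EFinD -big_split /=; congr EFin; apply: eq_bigr => x _.
case: eqP => [->|/eqP Px0]; first by rewrite mul0r addr0.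
have Fx0 : F x != 0 by move/forallP/(_ x): acF; rewrite Px0.
have Px : 0 < P x by rewrite lt0r Px0 P0.
have Fx : 0 < F x by rewrite lt0r Fx0 F0.
have Qx : 0 < Q x by rewrite QE mulr_gt0.
by rewrite -mulrDr -lnM ?posrE ?divr_gt0 // QE invfM mulrA mulrAC mulfVK ?lt0r_neq0.
Qed.

Section Gibbs_inequality.
Variables (P Q : T -> R).
Hypotheses (hP : is_prob P) (hQ : is_prob Q).

Let gap x := (if P x == 0 then 0 else P x * ln (P x / Q x)) - (P x - Q x).

Let relent_sum_gap : relent_sum P Q = \sum_x gap x.
Proof. by rewrite sumrB sumrB hP.2 hQ.2 subrr subr0. Qed.

Let gap_ge0 x : abs_continuous P Q -> 0 <= gap x.
Proof.
move=> /forallP/(_ x); rewrite /gap subr_ge0; case: eqP => [->|/eqP Px0 /= Qx0].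
  by rewrite sub0r oppr_le0 hQ.1.
by rewrite ler_subr_mul_ln // lt0r ?Px0 ?Qx0 ?hP.1 ?hQ.1.
Qed.

Lemma relent_ge0 : (0 <= relent P Q)%E.
Proof.
have [ac|nac] := boolP (abs_continuous P Q); last by rewrite relent_oo ?leey.
by rewrite relent_fin // lee_fin relent_sum_gap sumr_ge0 // => x _; apply: gap_ge0.
Qed.

Lemma relent_eq0 : relent P Q = 0%E -> P = Q.
Proof.
have [ac|nac] := boolP (abs_continuous P Q); last by rewrite relent_oo.
rewrite relent_fin // relent_sum_gap => -[/psumr_eq0P gap0]; apply: boolp.funext => x.
have := gap0 (fun y _ => gap_ge0 y ac) x isT; rewrite /gap.
case: eqP => [-> /eqP|/eqP Px0 /eqP]; first by rewrite !sub0r opprK => /eqP ->.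
move/forallP/(_ x): ac; rewrite Px0 /= => Qx0; rewrite subr_eq0 => /eqP.
by apply: mul_ln_div_eq_subr; rewrite lt0r ?Px0 ?Qx0 ?hP.1 ?hQ.1.
Qed.

End Gibbs_inequality.
End RelativeEntropy.

Section Paths.
Variables (R : realType) (n : nat).

Definition glue N (x : 'I_n) (v : path_space n N) : path_space n N.+1 :=
  [ffun t => if unlift ord0 t is Some s then v s else x].

Lemma glue_ord0 N x (v : path_space n N) : glue x v ord0 = x.
Proof. by rewrite ffunE unlift_none. Qed.

Lemma glue_lift N x (v : path_space n N) t : glue x v (lift ord0 t) = v t.
Proof. by rewrite ffunE liftK. Qed.

Lemma glue_ord_max N x (v : path_space n N) : glue x v ord_max = v ord_max.
Proof. by rewrite -(glue_lift x v); congr (glue _ _ _); apply: val_inj. Qed.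

Lemma glue_bij N : bijective (fun p : 'I_n * path_space n N => glue p.1 p.2).
Proof.
exists (fun w : path_space n N.+1 => (w ord0, [ffun s => w (lift ord0 s)])).
  case=> x v; rewrite /= glue_ord0; congr pair.
  by apply/ffunP => s; rewrite ffunE glue_lift.
move=> w; apply/ffunP => t; rewrite ffunE /=.
by case: unliftP => [s ->|->]; rewrite ?ffunE.
Qed.

Lemma markov_meas_glue N (a : 'I_n -> R) (K : 'M[R]_n) x (v : path_space n N) :
  markov_meas a K (glue x v) = a x * markov_meas (K x) K v.
Proof.
rewrite /markov_meas big_ord_recl glue_ord0 !glue_lift.
have -> : widen_ord (leqnSn N.+1) ord0 = ord0 by apply: val_inj.
rewrite glue_ord0; congr (_ * (_ * _)); apply: eq_bigr => t _.
have -> : widen_ord (leqnSn N.+1) (lift ord0 t) = lift ord0 (widen_ord (leqnSn N) t).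
  exact: val_inj.
by rewrite !glue_lift.
Qed.

Lemma markov_meas_endpoints N (a : 'I_n -> R) (K : 'M[R]_n) i j :
  \sum_(w : path_space n N | (w ord0 == i) && (w ord_max == j)) markov_meas a K w
  = a i * (K ^+ N) i j.
Proof.
elim: N a i => [|N IHN] a i.
  rewrite expr0 mxE (reindex (fun x : 'I_n => [ffun _ : 'I_1 => x])) /=; last first.
    exists (fun w : path_space n 0 => w ord0) => [x _|w _]; first by rewrite ffunE.
    by apply/ffunP => t; rewrite ffunE (ord1 t).
  under eq_bigl do rewrite !ffunE.
  rewrite big_mkcondr big_pred1_eq /markov_meas ffunE big_ord0 mulr1.
  by case: eqP; rewrite ?mulr1 ?mulr0.
rewrite (reindex _ (onW_bij _ (glue_bij N))) /=.
under eq_bigl do rewrite glue_ord0 glue_ord_max.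
rewrite -(pair_big_dep (pred1 i) (fun _ (v : path_space n N) => v ord_max == j)
  (fun x v => markov_meas a K (glue x v))) big_pred1_eq /=.
under eq_bigr do rewrite markov_meas_glue.
rewrite -big_distrr /= exprS -mulmxE mxE; congr (_ * _).
rewrite (partition_big (fun v : path_space n N => v ord0) xpredT) //=.
by apply: eq_bigr => k _; under eq_bigl do rewrite andbC; rewrite IHN.
Qed.

Lemma marg_markov_meas_ord0 N (a : 'I_n -> R) (K : 'M[R]_n) i :
  marg (markov_meas (N := N) a K) ord0 i = a i * \sum_j (K ^+ N) i j.
Proof.
rewrite /marg (partition_big (fun w : path_space n N => w ord_max) xpredT) //=.
by rewrite big_distrr; apply: eq_bigr => j _; rewrite markov_meas_endpoints.
Qed.

Lemma marg_markov_meas_ord_max N (a : 'I_n -> R) (K : 'M[R]_n) j :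
  marg (markov_meas (N := N) a K) ord_max j = \sum_i a i * (K ^+ N) i j.
Proof.
rewrite /marg (partition_big (fun w : path_space n N => w ord0) xpredT) //=.
by apply: eq_bigr => i _; under eq_bigl do rewrite andbC; rewrite markov_meas_endpoints.
Qed.

Lemma sum_marg N (P : path_space n N -> R) t : \sum_x marg P t x = \sum_w P w.
Proof. by rewrite (partition_big (fun w : path_space n N => w t) xpredT). Qed.

Lemma sum_marg_mul N (P : path_space n N -> R) t (h : 'I_n -> R) :
  \sum_w P w * h (w t) = \sum_x marg P t x * h x.
Proof.
rewrite (partition_big (fun w : path_space n N => w t) xpredT) //=.
by apply: eq_bigr => x _; rewrite /marg big_distrl; apply: eq_bigr => w /eqP ->.
Qed.

Lemma prod_path_ratio (F : fieldType) N (w : path_space n N) (g : 'I_n -> F) :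
  (forall i, g i != 0) ->
  \prod_(t < N) (g (w (lift ord0 t)) / g (w (widen_ord (leqnSn N) t)))
  = g (w ord_max) / g (w ord0).
Proof.
move=> g_neq0; case: N w => [|N] w.
  by rewrite big_ord0 (ord1 ord_max) divff.
pose h k := g (w (inord k)).
have hE (t : 'I_N.+2) : g (w t) = h t by rewrite /h inord_val.
rewrite !hE (eq_bigr (fun t : 'I_N.+1 => h t.+1 / h t)) => [|t _]; last by rewrite !hE.
rewrite -(big_mkord xpredT (fun k => h k.+1 / h k)) telescope_prodf // => k _.
exact: g_neq0.
Qed.

End Paths.

Section MatrixPowers.
Variables (R : pzSemiRingType) (n : nat) (A : 'M[R]_n).

Lemma mulmx_exprl_fix m (u : 'M[R]_(m, n)) k : u *m A = u -> u *m A ^+ k = u.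
Proof.
move=> uA; elim: k => [|k IHk]; first by rewrite expr0 mulmx1.
by rewrite exprSr -mulmxE mulmxA IHk uA.
Qed.

Lemma mulmx_exprr_fix m (v : 'M[R]_(n, m)) k : A *m v = v -> A ^+ k *m v = v.
Proof.
move=> Av; elim: k => [|k IHk]; first by rewrite expr0 mul1mx.
by rewrite exprS -mulmxE -mulmxA IHk Av.
Qed.

End MatrixPowers.

Section HTransform.
Variables (F : fieldType) (n : nat) (M : 'M[F]_n) (lam : F) (phi : 'rV[F]_n).
Hypotheses (lam_neq0 : lam != 0) (phi_neq0 : forall i, phi 0 i != 0).

Definition htransform := lam^-1 *: (invmx (diag_mx phi) *m M *m diag_mx phi).

Let phiV := \row_i (phi 0 i)^-1.

Let diag_mxK : diag_mx phi *m diag_mx phiV = 1%:M.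
Proof.
rewrite mulmx_diag -diag_const_mx; congr diag_mx.
by apply/rowP => i; rewrite !mxE divff.
Qed.

Let diag_mx_unit : diag_mx phi \in unitmx.
Proof. by have [] := mulmx1_unit diag_mxK. Qed.

Lemma invmx_diag_mx : invmx (diag_mx phi) = diag_mx phiV.
Proof. by rewrite -[RHS](mulKmx diag_mx_unit) diag_mxK mulmx1. Qed.

Lemma htransformE i j : htransform i j = lam^-1 * (phi 0 j / phi 0 i) * M i j.
Proof. by rewrite /htransform invmx_diag_mx mul_mx_diag mul_diag_mx !mxE; ring. Qed.

Lemma htransform_stochastic : M *m phi^T = lam *: phi^T ->
  htransform *m const_mx 1 = const_mx 1 :> 'cV_n.
Proof.
move=> Mphi; have phiT : diag_mx phi *m (const_mx 1 : 'cV_n) = phi^T.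
  by apply/matrixP => i j; rewrite mul_diag_mx !mxE mulr1 (ord1 j).
rewrite /htransform -scalemxAl -!mulmxA phiT Mphi -scalemxAr scalerA mulVf //.
by rewrite scale1r -phiT mulKmx.
Qed.

Lemma htransform_invariant (phih : 'rV[F]_n) : phih *m M = lam *: phih ->
  (phih *m diag_mx phi) *m htransform = phih *m diag_mx phi.
Proof.
move=> phihM; rewrite /htransform -scalemxAr !mulmxA mulmxK // phihM.
by rewrite -!scalemxAl scalerA mulVf // scale1r.
Qed.

End HTransform.

Section SchroedingerBridge.
Variables (R : realType) (n N : nat) (M : 'M[R]_n) (lam : R) (phi phih : 'rV[R]_n).
Variable mu0 : 'I_n -> R.
Hypotheses (M_ge0 : forall i j, 0 <= M i j) (lam_gt0 : 0 < lam).
Hypotheses (phi_gt0 : forall i, 0 < phi 0 i) (phih_gt0 : forall i, 0 < phih 0 i).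
Hypotheses (phi_right : M *m phi^T = lam *: phi^T).
Hypothesis phih_left : M^T *m phih^T = lam *: phih^T.
Hypotheses (phi_phih_sum : \sum_x phi 0 x * phih 0 x = 1) (mu0_gt0 : forall x, 0 < mu0 x).

Let nubar : 'rV[R]_n := \row_x (phi 0 x * phih 0 x).
Let Pi := htransform M lam phi.
Let frakM := markov_meas (N := N) mu0 M.
Let Pstar := markov_meas (N := N) (fun x => nubar 0 x) Pi.
Let feasible (P : path_space n N -> R) :=
  is_prob P /\ (forall x, marg P ord0 x = nubar 0 x)
            /\ (forall x, marg P ord_max x = nubar 0 x).

Let lam_neq0 : lam != 0. Proof. exact: lt0r_neq0. Qed.
Let phi_neq0 i : phi 0 i != 0. Proof. exact: lt0r_neq0. Qed.

Lemma markov_meas_htransform (a : 'I_n -> R) (w : path_space n N) :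
  markov_meas a Pi w
  = lam ^- N * (phi 0 (w ord_max) / phi 0 (w ord0)) * markov_meas a M w.
Proof.
rewrite /markov_meas; under eq_bigr do rewrite htransformE //.
by rewrite 2!big_split /= prodr_const card_ord prod_path_ratio // exprVn; ring.
Qed.

Lemma htransform_rows_sum1 i : \sum_j (Pi ^+ N) i j = 1.
Proof.
have Pi_stoch := htransform_stochastic lam_neq0 phi_neq0 phi_right.
have := congr1 (fun v : 'cV_n => v i 0) (mulmx_exprr_fix N Pi_stoch).
by rewrite !mxE => <-; apply: eq_bigr => j _; rewrite mxE mulr1.
Qed.

Lemma nubar_invariant : nubar *m Pi = nubar.
Proof.
have -> : nubar = phih *m diag_mx phi by apply/rowP => x; rewrite mul_mx_diag !mxE mulrC.
apply: htransform_invariant => //; apply: trmx_inj.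
by rewrite trmx_mul phih_left linearZ.
Qed.

Lemma nubar_htransform_expr j : \sum_i nubar 0 i * (Pi ^+ N) i j = nubar 0 j.
Proof.
have := congr1 (fun v : 'rV_n => v 0 j) (mulmx_exprl_fix N nubar_invariant).
by rewrite !mxE.
Qed.

Let c x := phih 0 x / (lam ^+ N * mu0 x).
Let tilt (w : path_space n N) := c (w ord0) * phi 0 (w ord_max).

Let c_gt0 x : 0 < c x.
Proof. by rewrite divr_gt0 ?mulr_gt0 ?exprn_gt0. Qed.

Let tilt_gt0 w : 0 < tilt w.
Proof. exact: mulr_gt0. Qed.

Let frakM_ge0 w : 0 <= frakM w.
Proof. by rewrite mulr_ge0 ?prodr_ge0 ?ltW. Qed.

Lemma Pstar_tilt w : Pstar w = tilt w * frakM w.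
Proof.
rewrite /Pstar markov_meas_htransform /frakM /markov_meas /tilt /c mxE.
by field; rewrite !lt0r_neq0 ?mulr_gt0 ?exprn_gt0.
Qed.

Lemma Pstar_feasible : feasible Pstar.
Proof.
have marg0 x : marg Pstar ord0 x = nubar 0 x.
  by rewrite marg_markov_meas_ord0 htransform_rows_sum1 mulr1.
split; [split|split] => //.
- by move=> w; rewrite Pstar_tilt mulr_ge0 ?frakM_ge0 ?ltW ?tilt_gt0.
- rewrite -(sum_marg Pstar ord0) -phi_phih_sum.
  by apply: eq_bigr => x _; rewrite marg0 mxE.
- by move=> x; rewrite marg_markov_meas_ord_max nubar_htransform_expr.
Qed.

Let cost := \sum_x nubar 0 x * ln (c x) + \sum_x nubar 0 x * ln (phi 0 x).

Lemma relent_frakM P : feasible P -> relent P frakM = (relent P Pstar + cost%:E)%E.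
Proof.
move=> [[P_ge0 _] [marg0 margN]].
rewrite (relent_tilt (Q := Pstar) (r := tilt)) //; last exact: Pstar_tilt.
congr (_ + _%:E)%E.
transitivity (\sum_w (P w * ln (c (w ord0)) + P w * ln (phi 0 (w ord_max)))).
  by apply: eq_bigr => w _; rewrite -mulrDr lnM ?posrE.
rewrite big_split /= (sum_marg_mul P ord0 (fun x => ln (c x))).
rewrite (sum_marg_mul P ord_max (fun x => ln (phi 0 x))).
by congr (_ + _); apply: eq_bigr => x _; rewrite ?marg0 ?margN.
Qed.

Lemma relent_Pstar : relent Pstar frakM = cost%:E.
Proof. by rewrite relent_frakM ?relentxx ?add0e //; apply: Pstar_feasible. Qed.

Lemma Pstar_optimal P : feasible P -> (relent Pstar frakM <= relent P frakM)%E.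
Proof.
move=> fP; rewrite relent_Pstar relent_frakM // leeDr //.
exact: relent_ge0 fP.1 Pstar_feasible.1.
Qed.

Lemma Pstar_unique P : feasible P -> relent P frakM = relent Pstar frakM -> P = Pstar.
Proof.
move=> fP; rewrite relent_Pstar relent_frakM // => Ecost.
apply: (relent_eq0 fP.1 Pstar_feasible.1).
by rewrite -(@addeK _ cost%:E (relent P Pstar)) // Ecost subee.
Qed.

End SchroedingerBridge.

Theorem proposition3p2 (R : realType) (n N : nat) (M : 'M[R]_n)
  (lam : R) (phi phih : 'rV[R]_n) (mu0 : 'I_n -> R) :
  (1 <= N)%N ->
  (forall i j, 0 <= M i j) ->
  (forall i j, 0 < (M ^+ N) i j) ->
  spectral_radius M lam ->
  0 < lam ->
  (forall i, 0 < phi 0 i) -> (forall i, 0 < phih 0 i) ->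
  M *m phi^T = lam *: phi^T ->
  M^T *m phih^T = lam *: phih^T ->
  \sum_(x < n) phi 0 x * phih 0 x = 1 ->
  (forall x, 0 < mu0 x) ->
  let nubar : 'rV[R]_n := \row_x (phi 0 x * phih 0 x) in
  let Pibar : 'M[R]_n := lam^-1 *: (invmx (diag_mx phi) *m M *m diag_mx phi) in
  let frakM := markov_meas (N := N) mu0 M in
  let Pstar := markov_meas (N := N) (fun x => nubar 0 x) Pibar in
  let feasible (P : path_space n N -> R) :=
    is_prob P /\ (forall x, marg P ord0 x = nubar 0 x)
              /\ (forall x, marg P ord_max x = nubar 0 x) in
  [/\ feasible Pstar,
      (forall P, feasible P -> (relent Pstar frakM <= relent P frakM)%E),
      (forall P, feasible P -> relent P frakM = relent Pstar frakM -> P = Pstar)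
    & Pibar^T *m nubar^T = nubar^T].
Proof.
move=> _ M_ge0 _ _ lam_gt0 phi_gt0 phih_gt0 phi_right phih_left phi_phih_sum mu0_gt0.
move=> nubar Pibar frakM Pstar feasible; split.
- exact: Pstar_feasible.
- by move=> P; apply: Pstar_optimal.
- by move=> P; apply: Pstar_unique.
- by rewrite -trmx_mul nubar_invariant.
Qed.
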